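(* Let $G$ be a $2$-connected graph, $k\ge 0$ an integer, and $F\subseteq E(G)$ with $|F|\le k$ such that $T=G/F$ is a cactus; let $\mathcal{W}$ be the $T$-witness structure of $G$. Let $f:V(G)\to\{1,2,3\}$ be a random coloring in which each vertex receives a color independently and uniformly at random. Then $f$ is compatible with $\mathcal{W}$ with probability at least $1/3^{6k}$.
   Context: A cactus is a connected graph in which every edge lies in at most one cycle. For $F\subseteq E(G)$, $G/F$ is the graph whose vertices correspond to the parts of the partition of $V(G)$ into the vertex sets of connected components of $(V(F),F)$ and singletons $\{v\}$ for $v\notin V(F)$, two parts adjacent iff some edge of $G$ joins them; this partition is the $G/F$-witness structure $\mathcal{W}$, with $W(t)$ the part for $t\in V(G/F)$. A witness set is big if it has at least two vertices, singleton otherwise. A cable path in a graph $H$ is a path $(v_1,\dots,v_q)$ such that $N_H(v_i)=\{v_{i-1},v_{i+1}\}$ for each $2\le i\le q-1$. A coloring $f:V(G)\to\{1,2,3\}$ is compatible with $\mathcal{W}$ if: (1) every witness set is monochromatic; (2) for every edge $t_xt_y\in E(T)$ with $W(t_x),W(t_y)$ both big, $f(W(t_x))\ne f(W(t_y))$; (3) for every cable path $(t_x,t_1,\dots,t_q,t_y)$ in $T$ ($q\ge1$) with $W(t_x),W(t_y)$ big and all $W(t_i)$ singleton, $f(W(t_x))\neq f(W(t_1))$ and $f(W(t_y))\ne f(W(t_q))$. *)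

From mathcomp Require Import all_boot.
Set Implicit Arguments. Unset Strict Implicit. Unset Printing Implicit Defensive.

Section Defs.
Variable V : finType.

Definition simple_graph (e : rel V) : Prop := symmetric e /\ irreflexive e.

Definition connected_graph (e : rel V) : Prop := forall x y : V, connect e x y.

Definition two_connected (e : rel V) : Prop :=
  2 < #|V| /\ connected_graph e /\
  forall v x y : V, x != v -> y != v ->
    connect (fun a b => [&& e a b, a != v & b != v]) x y.

Definition edge_subset (e : rel V) (F : {set {set V}}) : Prop :=
  forall s, s \in F -> exists x y, e x y /\ s = [set x; y].

Definition Frel (F : {set {set V}}) : rel V := fun x y => [set x; y] \in F.

(* witness set containing x: its component in (V,F) (a singleton if x is not in V(F)) *)
Definition W (F : {set {set V}}) (x : V) : {set V} := [set y | connect (Frel F) x y].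

(* vertex set of G/F: the parts of the witness structure *)
Definition parts (F : {set {set V}}) : {set {set V}} := [set W F x | x in V].

(* adjacency of G/F (on {set V}; non-parts are isolated) *)
Definition contr_adj (e : rel V) (F : {set {set V}}) : rel {set V} :=
  fun A B => [&& A \in parts F, B \in parts F, A != B &
                 [exists x in A, exists y in B, e x y]].

Definition big (A : {set V}) : bool := 1 < #|A|.
Definition singleton (A : {set V}) : bool := #|A| == 1.
End Defs.

Section Graph.
Variable U : finType.
Variable adj : rel U.

Definition is_cycle (c : seq U) : bool := [&& 2 < size c, uniq c & cycle adj c].

Definition cycle_edge (c : seq U) (a b : U) : bool :=
  ((a, b) \in zip c (rot 1 c)) || ((b, a) \in zip c (rot 1 c)).

(* cactus on vertex set P: connected and each edge lies in at most one cycle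
   (cycles being identified with their edge sets, i.e. as subgraphs). *)
Definition cactus (P : {set U}) : Prop :=
  (forall a b, a \in P -> b \in P -> connect adj a b) /\
  forall a b c1 c2, adj a b -> is_cycle c1 -> is_cycle c2 ->
    cycle_edge c1 a b -> cycle_edge c2 a b ->
    forall x y, cycle_edge c1 x y = cycle_edge c2 x y.

Definition nbhd (t : U) : {set U} := [set u | adj t u].

Definition cable_path (tx : U) (ts : seq U) (ty : U) : Prop :=
  let s := tx :: rcons ts ty in
  [/\ uniq s, path adj tx (rcons ts ty) &
      forall i, 0 < i -> i < (size s).-1 ->
        nbhd (nth tx s i) = [set nth tx s i.-1; nth tx s i.+1]].
End Graph.

Definition compatible (V : finType) (e : rel V) (F : {set {set V}})
    (f : {ffun V -> 'I_3}) : Prop :=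
  [/\
      (forall x y, y \in W F x -> f x = f y),
      (forall A B, contr_adj e F A B -> big A -> big B ->
         forall x y, x \in A -> y \in B -> f x != f y) &
      (forall tx ts ty, cable_path (contr_adj e F) tx ts ty ->
         ts != [::] -> big tx -> big ty -> all (@singleton V) ts ->
         (forall x y, x \in tx -> y \in head tx ts -> f x != f y) /\
         (forall x y, x \in ty -> y \in last tx ts -> f x != f y))].

From mathcomp Require Import all_boot zify boolp perm.
Set Implicit Arguments. Unset Strict Implicit. Unset Printing Implicit Defensive.

(* The cactus T = G/F has a proper 3-colouring col: split a connected vertex set at a
   vertex v into the component K of some w in Z - v and the rest R; by the cactus
   property v has at most two neighbours in K, so after permuting the colours on K the
   colourings of K and R glue. Every colouring f that equals col (W x) on the vertices x
   of big witness sets and of the witness sets next to the big ends of cable paths is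
   compatible. There are at most 2|F| vertices of the first kind; the same splitting
   shows that a cactus with b big vertices has at most 4(b - 1) such cable ends, each a
   singleton witness set, and b <= |F|. So at most 6k vertices are fixed and the others
   are free, giving at least 3^(|V| - 6k) compatible colourings. *)

Section Cactus.
Variables (U : finType) (adj : rel U).
Hypotheses (adj_sym : symmetric adj) (adj_irr : irreflexive adj).
Hypothesis cycle_edge_unique : forall a b c1 c2, adj a b ->
  is_cycle adj c1 -> is_cycle adj c2 -> cycle_edge c1 a b -> cycle_edge c2 a b ->
  forall x y, cycle_edge c1 x y = cycle_edge c2 x y.

Definition induced (A : {set U}) : rel U := fun x y => [&& x \in A, y \in A & adj x y].

Definition connected_in (A : {set U}) : Prop :=
  forall x y, x \in A -> y \in A -> connect (induced A) x y.

Lemma induced_sym A : symmetric (induced A).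
Proof. by move=> x y; rewrite /induced adj_sym andbCA. Qed.

Lemma connect_induced_setI (A B : {set U}) x y :
  connect (induced A) x y -> x \in B ->
  (forall a b, a \in B -> induced A a b -> b \in B) ->
  connect (induced (A :&: B)) x y.
Proof.
move=> /connectP [p pA ->] xB closB.
elim: p x pA xB => [|z p IH] x /=; first by rewrite connect0.
move=> /andP[xz pz] xB; have zB := closB _ _ xB xz.
apply: connect_trans (IH z pz zB); apply: connect1.
by move: xz; rewrite /induced !inE xB zB => /and3P[-> -> ->].
Qed.

Lemma induced_path_sub A x p : path (induced A) x p -> {subset p <= A}.
Proof.
elim: p x => [|z p IH] x //= /andP[/and3P[_ zA _] pz] y.
by rewrite inE => /orP[/eqP->//|]; apply: (IH z pz).
Qed.

Lemma connect_induced_uniq_path A x y : connect (induced A) x y -> x != y ->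
  exists p, [/\ path adj x p, uniq (x :: p), {subset p <= A}, last x p = y & p != [::]].
Proof.
move=> /connectP[p pA ->]; case: (shortenP pA) => q pq uq _ xy.
exists q; split => //.
- by apply: sub_path pq => a b /and3P[].
- exact: induced_path_sub pq.
- by case: q {pq uq} xy => //=; rewrite eqxx.
Qed.

Lemma mem_zip_rot1 (v : U) s a b : (a, b) \in zip (v :: s) (rot 1 (v :: s)) ->
  exists2 i, i <= size s & nth v (v :: s) i = a /\ nth v (rcons s v) i = b.
Proof.
rewrite rot1_cons => ab; exists (index (a, b) (zip (v :: s) (rcons s v))).
  have sz : size (zip (v :: s) (rcons s v)) = (size s).+1.
    by rewrite size_zip size_rcons minnn.
  by rewrite -ltnS -sz index_mem.
move: (nth_index (v, v) ab).
by rewrite nth_zip ?size_rcons // => -[-> ->].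
Qed.

Lemma cycle_edge_head (v x : U) p : cycle_edge (v :: x :: p) v x.
Proof. by rewrite /cycle_edge rot1_cons /= inE eqxx. Qed.

Lemma cycle_edge_last (v : U) s : cycle_edge (v :: s) (last v s) v.
Proof.
rewrite /cycle_edge rot1_cons [v :: s]lastI zip_rcons ?size_belast //.
by rewrite mem_rcons mem_head.
Qed.

Lemma cycle_edge_headF (v : U) s a : uniq (v :: s) -> s != [::] ->
  a != head v s -> a != last v s -> cycle_edge (v :: s) a v = false.
Proof.
move=> /= /andP[vs _] sn ah al; rewrite /cycle_edge; apply/norP; split; apply/negP.
- move=> /mem_zip_rot1 [i le_i_s [ai vi]]; move: vi; rewrite nth_rcons.
  case: ifP => [lt_i_s vi|]; first by move: vs; rewrite -vi mem_nth.
  move=> ge_i_s _; have e_i : i = (size (v :: s)).-1.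
    by apply/eqP; rewrite /= eqn_leq le_i_s leqNgt ge_i_s.
  by move: al; rewrite -ai e_i nth_last eqxx.
- move=> /mem_zip_rot1 [[|i] le_i_s [vi ai]].
  + move: ah ai; case: s sn {vs le_i_s vi al} => //= x s _.
    by rewrite eq_sym => /negPf + ax; rewrite ax eqxx.
  + by move: vs; rewrite -[v in v \notin _]vi /= mem_nth.
Qed.

(* Three neighbours x, y, z of v in K would give two cycles v x ~ y and v x ~ z
   through the edge vx, of which only the first contains the edge vy. *)
Lemma card_nbrs_connected_le2 K v : connected_in K -> v \notin K ->
  #|[set x in K | adj v x]| <= 2.
Proof.
move=> cK vK; rewrite leqNgt; apply/negP => /card_gt2P [x [y [z [[xK yK zK] [xy yz zx]]]]].
move: xK yK zK; rewrite !inE => /andP[xK vx] /andP[yK vy] /andP[zK vz].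
have [p1 [p1P p1U p1K p1y p1N]] := connect_induced_uniq_path (cK _ _ xK yK) xy.
have [p2 [p2P p2U p2K p2z p2N]] :=
  connect_induced_uniq_path (cK _ _ xK zK) (ltac:(by rewrite eq_sym)).
have uniq_v p : uniq (x :: p) -> {subset p <= K} -> uniq (v :: x :: p).
  move=> xpU pK; rewrite cons_uniq xpU andbT inE negb_or.
  apply/andP; split; first by apply: contraNneq vK => ->.
  by apply/negP => /pK; apply/negP.
have cyc p : path adj x p -> uniq (x :: p) -> {subset p <= K} -> p != [::] ->
    adj v (last x p) -> is_cycle adj (v :: x :: p).
  move=> pP xpU pK pN vl; rewrite /is_cycle uniq_v // andbC /=.
  by rewrite rcons_path pP vx adj_sym vl; case: p pN {pP xpU pK vl}.
have := cycle_edge_unique vx (cyc _ p1P p1U p1K p1N ltac:(by rewrite p1y))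
  (cyc _ p2P p2U p2K p2N ltac:(by rewrite p2z)) (cycle_edge_head _ _ _)
  (cycle_edge_head _ _ _) y v.
rewrite -{1}p1y -[last x p1]/(last v (x :: p1)) cycle_edge_last.
rewrite cycle_edge_headF //=; first exact: uniq_v.
- by rewrite eq_sym.
- by rewrite p2z.
Qed.

Variables (big : pred U) (x0 : U).

(* A cable path of the paper between two big vertices, listed by position in c;
   the default x0 of nth is never read. *)
Definition cable (c : seq U) : Prop :=
  [/\ 2 < size c,
      forall i, i.+1 < size c -> adj (nth x0 c i) (nth x0 c i.+1),
      big (nth x0 c 0) && big (nth x0 c (size c).-1),
      nth x0 c 0 != nth x0 c (size c).-1 &
      forall i, 0 < i -> i < (size c).-1 ->
        [/\ ~~ big (nth x0 c i), nth x0 c i.-1 != nth x0 c i.+1 &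
            nbhd adj (nth x0 c i) = [set nth x0 c i.-1; nth x0 c i.+1]]].

Lemma subset_nthP (A : {set U}) (c : seq U) :
  {subset c <= A} <-> (forall i, i < size c -> nth x0 c i \in A).
Proof.
split=> [cA i /(mem_nth x0)/cA // | cA y /(nthP x0) [i ic <-]]; exact: cA.
Qed.

Lemma cable_rev (c : seq U) : cable c -> cable (rev c).
Proof.
case=> [s3 ad /andP[b0 b1] ne int]; set n := size c in s3 ad b1 ne int *.
have E i : i < n -> nth x0 (rev c) i = nth x0 c (n - i.+1) by move=> h; rewrite nth_rev.
rewrite /cable size_rev; split => //.
- move=> i hi; rewrite !E; try lia.
  have -> : n - i.+1 = (n - i.+2).+1 by lia.
  by rewrite adj_sym; apply: ad; lia.
- rewrite !E; try lia.
  have -> : n - 1 = n.-1 by lia.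
  have -> : n - n.-1.+1 = 0 by lia.
  by rewrite b0 b1.
- rewrite !E; try lia.
  have -> : n - 1 = n.-1 by lia.
  have -> : n - n.-1.+1 = 0 by lia.
  by rewrite eq_sym.
- move=> i h0 h1; rewrite !E; try lia.
  have [] := int (n - i.+1); try lia.
  have -> : (n - i.+1).-1 = n - i.+2 by lia.
  have -> : (n - i.+1).+1 = n - i.-1.+1 by lia.
  by move=> -> ne2 ->; split; rewrite 1?eq_sym // setUC.
Qed.

Lemma set2_inj (a b c : U) : [set a; b] = [set a; c] -> b != a -> c != a -> b = c.
Proof.
move=> E hb hc; have: c \in [set a; b] by rewrite E !inE eqxx orbT.
by rewrite !inE (negbTE hc) /= => /eqP ->.
Qed.

(* Inner vertices have degree 2, so a cable is determined by its first edge. *)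
Lemma cable_det (c c' : seq U) : cable c -> cable c' ->
  nth x0 c 0 = nth x0 c' 0 -> nth x0 c 1 = nth x0 c' 1 -> c = c'.
Proof.
case=> [s3 _ /andP[_ b1] _ int] [s3' _ /andP[_ b1'] _ int'] e0 e1.
have same i : (i < size c -> i < size c' -> nth x0 c i = nth x0 c' i) /\
              (i.+1 < size c -> i.+1 < size c' -> nth x0 c i.+1 = nth x0 c' i.+1).
  elim: i => [|i [IH1 IH2]]; first by split.
  split => // h h'.
  have [_ n1 s1] := int i.+1 erefl ltac:(lia).
  have [_ n1' s1'] := int' i.+1 erefl ltac:(lia).
  move: s1 s1' n1 n1'; rewrite /= IH2 ?IH1; try lia.
  move=> S1 S1' n1 n1'.
  by apply: (@set2_inj (nth x0 c' i)); rewrite -?S1 -?S1' // eq_sym.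
have [lt|gt|eq] := ltngtP (size c) (size c').
- have E := (same (size c).-1).1 ltac:(lia) ltac:(lia).
  have [nb _ _] := int' (size c).-1 ltac:(lia) ltac:(lia).
  by rewrite -E b1 in nb.
- have E := (same (size c').-1).1 ltac:(lia) ltac:(lia).
  have [nb _ _] := int (size c').-1 ltac:(lia) ltac:(lia).
  by rewrite E b1' in nb.
- by apply: (eq_from_nth (x0 := x0)) => // i hi; apply: (same i).1; lia.
Qed.

Definition closed_but (Z K : {set U}) (v : U) : Prop :=
  forall x y, x \in K -> y \in Z -> y != v -> adj x y -> y \in K.

Lemma cable_side Z K v (c : seq U) : closed_but Z K v -> cable c -> {subset c <= Z} ->
  forall i j, i <= j -> j < size c -> (forall m, i <= m -> m <= j -> nth x0 c m != v) ->
  (nth x0 c i \in K) = (nth x0 c j \in K).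
Proof.
move=> clK [_ ad _ _ _] /subset_nthP cZ i j.
elim: j => [|j IHj] ij jc jv; first by have -> : i = 0 by lia.
have [->//|ne_ij] := eqVneq i j.+1.
rewrite IHj; [|lia|lia|by move=> m h1 h2; apply: jv; lia].
have Zj := cZ j ltac:(lia); have Zj1 := cZ j.+1 jc.
have vj := jv j ltac:(lia) ltac:(lia); have vj1 := jv j.+1 ltac:(lia) ltac:(lia).
have a := ad j jc.
by apply/idP/idP => h; [apply: clK h Zj1 vj1 a | apply: clK h Zj vj _; rewrite adj_sym].
Qed.

(* Inner vertices of a cable are not big, so the big vertex v can only be one of its ends. *)
Lemma cable_cut_cases Z K v (c : seq U) : closed_but Z K v -> v \notin K -> big v ->
  cable c -> {subset c <= Z} ->
  [\/ {subset c <= K}, {subset c <= Z :\: K},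
      nth x0 c 0 = v /\ nth x0 c 1 \in K |
      nth x0 c (size c).-1 = v /\ nth x0 c (size c).-2 \in K].
Proof.
move=> clK vK bv ch cZ; have side := cable_side clK ch cZ.
have iZ := (subset_nthP _ _).1 cZ.
case: ch => [s3 _ /andP[_ _] ne int]; set n := size c in s3 ne int side iZ *.
have inner_v m : 0 < m -> m < n.-1 -> nth x0 c m != v.
  by move=> h1 h2; have [nb _ _] := int m h1 h2; apply: contraNneq nb => ->.
have inR x : x \in Z -> x \notin K -> x \in Z :\: K by move=> xZ xK; rewrite inE xZ xK.
have allR j : (forall i, i < n -> i != j -> nth x0 c i \notin K) -> nth x0 c j = v ->
    {subset c <= Z :\: K}.
  move=> nK vj; apply/subset_nthP => i hi; apply: inR; first exact: iZ.
  by have [->|] := eqVneq i j; [rewrite vj | exact: nK].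
have [e0|n0] := eqVneq (nth x0 c 0) v.
  case k1: (nth x0 c 1 \in K); first by apply: Or43.
  apply: Or42; apply: (allR 0) => // -[//|i] hi _.
  rewrite -(side 1 i.+1) ?k1 //; try lia.
  move=> m h1 h2; have [->|] := eqVneq m n.-1; first by rewrite -e0 eq_sym.
  by move=> h3; apply: inner_v; lia.
have [el|nl] := eqVneq (nth x0 c n.-1) v.
  case k1: (nth x0 c n.-2 \in K); first by apply: Or44.
  apply: Or42; apply: (allR n.-1) => // i hi hi1.
  rewrite (side i n.-2) ?k1 //; try lia.
  by move=> [|m] h1 h2 //; apply: inner_v; lia.
have nv m : m < n -> nth x0 c m != v.
  move=> h; case: m h => [|m] h //; have [->//|] := eqVneq m.+1 n.-1.
  by move=> h3; apply: inner_v; lia.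
have sideK i : i < n -> (nth x0 c i \in K) = (nth x0 c 0 \in K).
  by move=> hi; rewrite (side 0 i) //; try lia; move=> m _ h; apply: nv; lia.
case k0: (nth x0 c 0 \in K).
  by apply: Or41; apply/subset_nthP => i hi; rewrite sideK.
by apply: Or42; apply/subset_nthP => i hi; apply: inR; rewrite ?iZ ?sideK ?k0.
Qed.

Definition nbig (Z : {set U}) : nat := #|[set x in Z | big x]|.

Definition cable_heads (Z : {set U}) : {set U} :=
  [set t | `[< exists c : seq U, [/\ cable c, {subset c <= Z} & nth x0 c 1 = t] >]].

(* The other head of the cable starting v, u (unique by cable_det); the default u is junk. *)
Definition far_head (v u : U) : U :=
  odflt u [pick t | `[< exists c, [/\ cable c, nth x0 c 0 = v, nth x0 c 1 = u &
                                      nth x0 c (size c).-2 = t] >]].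

Lemma cable_far_head (c : seq U) : cable c ->
  nth x0 c 1 = far_head (nth x0 c (size c).-1) (nth x0 c (size c).-2).
Proof.
move=> ch; have [s3 _ _ _ _] := ch; have chr := cable_rev ch.
have r0 : nth x0 (rev c) 0 = nth x0 c (size c).-1 by rewrite nth_rev ?subn1 //; lia.
have r1 : nth x0 (rev c) 1 = nth x0 c (size c).-2 by rewrite nth_rev; [congr nth; lia | lia].
have r2 : nth x0 (rev c) (size (rev c)).-2 = nth x0 c 1.
  by rewrite size_rev nth_rev; [congr nth; lia | lia].
rewrite /far_head; case: pickP => [t /asboolP [c' [ch' e0 e1 e2]] | none].
  by rewrite -e2 (cable_det ch' chr) ?r2 // ?e0 ?e1.
by move: (none (nth x0 c 1)) => /asboolP []; exists (rev c).
Qed.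

Definition proper_on (Z : {set U}) (col : U -> 'I_3) : Prop :=
  forall x y, x \in Z -> y \in Z -> adj x y -> col x != col y.

Section Cut.
Variables (Z : {set U}) (v w : U).
Hypotheses (cZ : connected_in Z) (vZ : v \in Z) (wZ : w \in Z) (vw : v != w).

Definition cut_comp : {set U} :=
  [set y in Z | (y != v) && connect (induced (Z :\ v)) w y].
Definition cut_rest : {set U} := Z :\: cut_comp.

Definition cut_nbrs : {set U} := [set x in cut_comp | adj v x].

Lemma cut_comp_sub : cut_comp \subset Z.
Proof. by apply/subsetP=> y; rewrite inE => /andP[]. Qed.

Lemma cut_comp_notin : v \notin cut_comp.
Proof. by rewrite inE eqxx andbF. Qed.

Lemma cut_comp_in : w \in cut_comp.
Proof. by rewrite inE wZ eq_sym vw connect0. Qed.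

Lemma cut_rest_in : v \in cut_rest.
Proof. by rewrite inE cut_comp_notin vZ. Qed.

Lemma cut_comp_closed : closed_but Z cut_comp v.
Proof.
move=> x y; rewrite !inE => /and3P[xZ xv wx] yZ yv xy; rewrite yZ yv /=.
by apply: connect_trans wx (connect1 _); rewrite /induced !inE xv xZ yv yZ xy.
Qed.

Lemma cut_comp_exit x y :
  x \in cut_comp -> y \in Z -> y \notin cut_comp -> adj x y -> y = v.
Proof.
move=> xK yZ yK xy; apply/eqP; apply: contraNT yK => yv.
exact: cut_comp_closed xK yZ yv xy.
Qed.

Lemma connected_cut_comp : connected_in cut_comp.
Proof.
have wK y : y \in cut_comp -> connect (induced cut_comp) w y.
  move=> yK; have : connect (induced (Z :\ v)) w y by move: yK; rewrite inE => /and3P[].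
  have -> : cut_comp = (Z :\ v) :&: cut_comp.
    by apply/setP=> z; rewrite !inE; case: (z \in Z); case: (z != v); rewrite ?andbF.
  move/connect_induced_setI; apply; first exact: cut_comp_in.
  move=> a b aK /and3P[_]; rewrite in_setD1 => /andP[bv bZ] ab.
  exact: cut_comp_closed aK bZ bv ab.
move=> x y xK yK; apply: connect_trans (wK y yK).
by rewrite (sym_connect_sym (induced_sym _)); apply: wK.
Qed.

Lemma connected_cut_rest : connected_in cut_rest.
Proof.
have toV x : x \in cut_rest -> connect (induced cut_rest) x v.
  rewrite inE => /andP[xK xZ]; have /connectP[p pZ pv] := cZ xZ vZ.
  elim: p x xK xZ pZ pv => [|z p IH] x xK xZ /=; first by move=> _ ->; rewrite connect0.
  move=> /andP[/and3P[_ zZ xz] pz] pv.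
  have [->|xv] := eqVneq x v; first by rewrite connect0.
  have zK : z \notin cut_comp.
    by apply: contra xK => zK; apply: cut_comp_closed zK xZ xv _; rewrite adj_sym.
  apply: connect_trans (IH z zK zZ pz pv); apply: connect1.
  by rewrite /induced !in_setD xK zK xZ zZ xz.
move=> x y xR yR; apply: connect_trans (toV x xR) _.
by rewrite (sym_connect_sym (induced_sym _)); apply: toV.
Qed.

Lemma card_cut_nbrs_le2 : #|cut_nbrs| <= 2.
Proof. exact: card_nbrs_connected_le2 connected_cut_comp cut_comp_notin. Qed.

Lemma card_cut_comp_lt : #|cut_comp| < #|Z|.
Proof.
apply/proper_card/properP; split; first exact: cut_comp_sub.
by exists v; last exact: cut_comp_notin.
Qed.

Lemma card_cut_rest_lt : #|cut_rest| < #|Z|.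
Proof.
apply/proper_card/properP; split; first exact: subsetDl.
by exists w; rewrite // inE cut_comp_in.
Qed.

(* v has at most two neighbours in cut_comp, so some colour m misses them all; swapping
   the colours of v and m on cut_comp makes the two colourings agree along the cut. *)
Lemma proper_on_cut cK cR : proper_on cut_comp cK -> proper_on cut_rest cR ->
  exists col, proper_on Z col.
Proof.
move=> pK pR.
have [m mN] : exists m : 'I_3, m \notin cK @: cut_nbrs.
  apply/existsP; rewrite -negb_forall; apply: contraTN card_cut_nbrs_le2 => /forallP allN.
  have /subset_leq_card : [set: 'I_3] \subset cK @: cut_nbrs.
    by apply/subsetP => m _; apply: allN.
  by rewrite cardsT card_ord => /leq_trans/(_ (leq_imset_card _ _)); rewrite -ltnNge.
pose pi := tperm (cR v) m.
have pi_v y : y \in cut_nbrs -> pi (cK y) != cR v.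
  move=> yN; rewrite -[X in _ != X](tpermR (cR v) m) (inj_eq perm_inj).
  by apply: contraNneq mN => <-; apply: imset_f.
exists (fun x => if x \in cut_comp then pi (cK x) else cR x) => x y xZ yZ xy.
have inR z : z \in Z -> z \notin cut_comp -> z \in cut_rest.
  by move=> zZ zK; rewrite inE zZ zK.
case xK: (x \in cut_comp); case yK: (y \in cut_comp).
- by rewrite (inj_eq perm_inj) pK.
- have yv := cut_comp_exit xK yZ (negbT yK) xy; subst y.
  by apply: pi_v; rewrite inE xK adj_sym.
- have xv := cut_comp_exit yK xZ (negbT xK) (ltac:(by rewrite adj_sym)); subst x.
  by rewrite eq_sym; apply: pi_v; rewrite inE yK.
- by apply: pR; rewrite // inR ?xK ?yK.
Qed.

Lemma nbig_cut : nbig Z = nbig cut_comp + nbig cut_rest.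
Proof.
rewrite /nbig -(cardsID cut_comp [set x in Z | big x]).
by congr (_ + _); apply: eq_card => x; rewrite !inE; case: (x \in Z); case: (big x);
  rewrite /= ?andbT ?andbF.
Qed.

Lemma cable_heads_cut_sub : big v ->
  cable_heads Z \subset
    cable_heads cut_comp :|: cable_heads cut_rest :|: cut_nbrs :|: far_head v @: cut_nbrs.
Proof.
move=> bv; apply/subsetP => t; rewrite inE => /asboolP [c [ch cZc <-]].
have [s3 ad _ _ _] := ch; rewrite !in_setU.
case: (cable_cut_cases cut_comp_closed cut_comp_notin bv ch cZc) => [cK|cR|[c0 c1]|[cl c2]].
- have -> // : nth x0 c 1 \in cable_heads cut_comp by rewrite inE; apply/asboolP; exists c.
- have -> : nth x0 c 1 \in cable_heads cut_rest by rewrite inE; apply/asboolP; exists c.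
  by rewrite orbT.
- have -> : nth x0 c 1 \in cut_nbrs by rewrite /cut_nbrs in_set c1 -c0 ad //; lia.
  by rewrite orbT.
- rewrite (cable_far_head ch) cl imset_f ?orbT // /cut_nbrs in_set c2 -cl adj_sym /=.
  have -> : (size c).-1 = (size c).-2.+1 by lia.
  by apply: ad; lia.
Qed.

Lemma card_cable_heads_cut : big v -> big w ->
  #|cable_heads cut_comp| <= 4 * (nbig cut_comp).-1 ->
  #|cable_heads cut_rest| <= 4 * (nbig cut_rest).-1 ->
  #|cable_heads Z| <= 4 * (nbig Z).-1.
Proof.
move=> bv bw hK hR.
have bK : 0 < nbig cut_comp by apply/card_gt0P; exists w; rewrite inE cut_comp_in.
have bR : 0 < nbig cut_rest by apply/card_gt0P; exists v; rewrite inE cut_rest_in.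
have N2 := card_cut_nbrs_le2.
have cardU (A B : {set U}) : #|A :|: B| <= #|A| + #|B| := leq_card_setU A B.
apply: leq_trans (subset_leq_card (cable_heads_cut_sub bv)) _.
set HK := cable_heads cut_comp in hK *; set HR := cable_heads cut_rest in hR *.
have := leq_imset_card (far_head v) cut_nbrs.
have := cardU (HK :|: HR :|: cut_nbrs) (far_head v @: cut_nbrs).
have := cardU (HK :|: HR) cut_nbrs; have := cardU HK HR.
rewrite nbig_cut; lia.
Qed.

End Cut.

Lemma connected_in_ind (P : {set U} -> Prop) :
  (forall Z, connected_in Z ->
    (forall Y : {set U}, #|Y| < #|Z| -> connected_in Y -> P Y) -> P Z) ->
  forall Z, connected_in Z -> P Z.
Proof.
move=> step Z; have [n] := ubnP #|Z|; elim: n Z => // n IHn Z ltZn cZ.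
by apply: step cZ _ => Y ltYZ cY; apply: IHn => //; lia.
Qed.

Lemma connected_in_proper_colouring Z : connected_in Z -> exists col, proper_on Z col.
Proof.
elim/connected_in_ind => {}Z cZ IH.
have [/card_gt1P [v [w [vZ wZ vw]]] | Z1] := ltnP 1 #|Z|.
  have [cK pK] := IH _ (card_cut_comp_lt w vZ) (connected_cut_comp wZ vw).
  have [cR pR] := IH _ (card_cut_rest_lt wZ vw) (connected_cut_rest cZ vZ).
  exact: (proper_on_cut wZ vw pK pR).
exists (fun=> ord0) => x y xZ yZ; move/card_le1_eqP: Z1 => /(_ x y xZ yZ) ->.
by rewrite adj_irr.
Qed.

Lemma card_cable_heads Z : connected_in Z -> #|cable_heads Z| <= 4 * (nbig Z).-1.
Proof.
elim/connected_in_ind => {}Z cZ IH.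
have [/card_gt1P [v [w []]] | Z1] := ltnP 1 (nbig Z).
  rewrite !inE => /andP[vZ bv] /andP[wZ bw] vw.
  apply: (card_cable_heads_cut vZ wZ vw bv bw).
    exact: IH (card_cut_comp_lt w vZ) (connected_cut_comp wZ vw).
  exact: IH (card_cut_rest_lt wZ vw) (connected_cut_rest cZ vZ).
suff -> : cable_heads Z = set0 by rewrite cards0.
apply/setP => t; rewrite !inE; apply/asboolP => -[c [[s3 _ /andP[b0 b1] ne _] cZc _]].
have /subset_nthP iZ := cZc.
have [Z0 Zl] : nth x0 c 0 \in Z /\ nth x0 c (size c).-1 \in Z by split; apply: iZ; lia.
move/card_le1_eqP: Z1 ne => /(_ (nth x0 c 0) (nth x0 c (size c).-1)) -> //.
  by rewrite eqxx.
all: by rewrite inE ?Z0 ?Zl.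
Qed.

End Cactus.

Lemma card_ffun_agree (V : finType) (X : {set V}) (g : V -> 'I_3) :
  3 ^ #|V| <= 3 ^ #|X| * #|[set f : {ffun V -> 'I_3} | [forall x in X, f x == g x]]|.
Proof.
set S := [set f | _]; set Q := [set h : {ffun V -> 'I_3} | [forall x in ~: X, h x == ord0]].
pose split_X (f : {ffun V -> 'I_3}) :=
  ([ffun x => if x \in X then g x else f x], [ffun x => if x \in X then f x else ord0]).
have split_inj : injective split_X.
  move=> f1 f2 [/ffunP E1 /ffunP E2]; apply/ffunP => x.
  by move: (E1 x) (E2 x); rewrite !ffunE; case: (x \in X) => [_ ->|-> _].
have : #|[set: {ffun V -> 'I_3}]| <= #|setX S Q|.
  rewrite -(card_imset _ split_inj); apply/subset_leq_card/subsetP => _ /imsetP [f _ ->].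
  rewrite in_setX !inE; apply/andP; split; apply/forall_inP => x; rewrite ?inE ffunE.
    by move=> ->.
  by move=> /negPf ->.
rewrite cardsT card_ffun card_ord cardsX mulnC => /leq_trans; apply; rewrite leq_mul2r.
apply/orP; right.
have : Q \subset pffun_on ord0 X [set: 'I_3].
  apply/subsetP => h; rewrite inE => /forall_inP hX; apply/pffun_onP.
  split=> [|y _]; last by rewrite inE.
  apply/subsetP => x; rewrite supportE; apply: contraR => xX.
  by apply: hX; rewrite inE.
by move/subset_leq_card; rewrite card_pffun_on cardsT card_ord.
Qed.

Section WitnessStructure.
Variables (V : finType) (e : rel V) (F : {set {set V}}).
Hypotheses (e_sym : symmetric e) (F_edges : edge_subset e F).

Local Notation T := (contr_adj e F).
Local Notation heads := (cable_heads T (@big V) set0 (parts F)).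

Lemma contr_adj_sym : symmetric T.
Proof.
move=> A B; rewrite /contr_adj andbCA (eq_sym A B); congr (_ && (_ && (_ && _))).
apply/existsP/existsP => -[x /andP [xA /existsP [y /andP [yB xy]]]];
  by exists y; rewrite yB /=; apply/existsP; exists x; rewrite xA e_sym.
Qed.

Lemma contr_adj_irr : irreflexive T.
Proof. by move=> A; rewrite /contr_adj eqxx /= !andbF. Qed.

Lemma contr_adj_parts A B : T A B -> (A \in parts F) && (B \in parts F).
Proof. by case/and4P => -> ->. Qed.

Lemma W_refl x : x \in W F x.
Proof. by rewrite inE connect0. Qed.

Lemma W_eq x y : y \in W F x -> W F y = W F x.
Proof.
have Fsym : connect_sym (Frel F) by apply: sym_connect_sym => a b; rewrite /Frel setUC.
by rewrite inE => xy; apply/setP => z; rewrite !inE (same_connect Fsym xy).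
Qed.

Lemma parts_W A x : A \in parts F -> x \in A -> W F x = A.
Proof. by move=> /imsetP [a _ ->]; apply: W_eq. Qed.

Lemma cactus_connected_in : cactus T (parts F) -> connected_in T (parts F).
Proof.
move=> [cT _] A B AP BP; rewrite (@eq_connect _ _ T) ?cT // => X Y.
by rewrite /induced; case XY: (T X Y); rewrite ?andbF ?andbT ?contr_adj_parts.
Qed.

Definition big_vertices : {set V} := [set x | big (W F x)].

Lemma card_big_vertices : #|big_vertices| <= 2 * #|F|.
Proof.
have sub : big_vertices \subset cover F.
  apply/subsetP => x; rewrite inE => /card_gt1P [y [z [yW zW yz]]].
  have [w wW wx] : exists2 w, w \in W F x & w != x.
    by have [yx|] := eqVneq y x; [exists z; rewrite // -yx eq_sym | exists y].
  move: wW; rewrite inE => /connectP [[|z' p] /= pF wl]; first by rewrite wl eqxx in wx.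
  case/andP: pF => xz' _; apply/bigcupP; exists [set x; z'] => //.
  by rewrite !inE eqxx.
apply: leq_trans (subset_leq_card sub) _; apply: leq_trans (leq_card_cover F).1 _.
rewrite mulnC -sum_nat_const; apply: leq_sum => s /F_edges [x [y [_ ->]]].
by rewrite cards2; case: (x != y).
Qed.

Lemma nbig_parts : 2 * nbig (@big V) (parts F) <= #|big_vertices|.
Proof.
set BP := [set A in parts F | big A].
have tBP : trivIset BP.
  apply/trivIsetP => A B; rewrite !inE => /andP[AP _] /andP[BP' _] AB.
  rewrite -setI_eq0; apply/set0Pn => -[x]; rewrite inE => /andP[xA xB].
  by rewrite -(parts_W AP xA) -(parts_W BP' xB) eqxx in AB.
have sub : cover BP \subset big_vertices.
  apply/subsetP => x /bigcupP [A]; rewrite inE => /andP[AP bA] xA.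
  by rewrite inE (parts_W AP xA).
apply: leq_trans (subset_leq_card sub); move: (leq_card_cover BP).2; rewrite tBP => /eqP ->.
by rewrite mulnC -sum_nat_const; apply: leq_sum => A; rewrite inE => /andP[].
Qed.

Lemma cable_heads_singleton t : t \in heads -> ~~ big t /\ t \in parts F.
Proof.
rewrite inE => /asboolP [c [[s3 _ _ _ inner] cP <-]].
have [nb _ _] := inner 1 erefl (ltac:(by rewrite ltn_predRL)).
by split => //; apply/cP/mem_nth; apply: ltn_trans s3.
Qed.

Definition cable_vertices : {set V} := [set x | W F x \in heads].

Lemma card_cable_vertices : #|cable_vertices| <= #|heads|.
Proof.
rewrite -(@card_in_imset _ _ (W F)).
  by apply/subset_leq_card/subsetP => t /imsetP [x]; rewrite inE => xh ->.
move=> x y; rewrite inE => /cable_heads_singleton [nb _] _ Wxy.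
have /card_le1_eqP : #|W F x| <= 1 by rewrite leqNgt.
by apply; rewrite ?W_refl // Wxy W_refl.
Qed.

Lemma cable_sub_parts c : cable T (@big V) set0 c -> {subset c <= parts F}.
Proof.
case=> [s3 ad _ _ _] A /(nthP set0) [i ic <-].
have [lt|ge] := ltnP i.+1 (size c); first by case/andP: (contr_adj_parts (ad i lt)).
have i0 : 0 < i by lia.
by have := ad i.-1; rewrite prednK // => /(_ ic)/contr_adj_parts/andP[].
Qed.

Lemma cable_path_cable tx ts ty : cable_path T tx ts ty -> ts != [::] ->
  big tx -> big ty -> all (@singleton V) ts -> cable T (@big V) set0 (tx :: rcons ts ty).
Proof.
case=> [uts pts nbhd_ts] tsN btx bty sts.
have sz : size (tx :: rcons ts ty) = (size ts).+2 by rewrite /= size_rcons.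
have D n : n < size (tx :: rcons ts ty) ->
    nth set0 (tx :: rcons ts ty) n = nth tx (tx :: rcons ts ty) n.
  by move=> h; apply: set_nth_default.
split.
- by rewrite sz ltnS ltnS lt0n size_eq0.
- move=> i hi; move/(pathP set0): pts; apply; move: hi; rewrite /= size_rcons; lia.
- by rewrite nth_last /= last_rcons btx bty.
- rewrite nth_last /= last_rcons; move: uts; rewrite cons_uniq => /andP[txN _].
  by apply: contraNneq txN => <-; rewrite mem_rcons mem_head.
- move=> i i0 isz; split.
  + case: i i0 isz => [//|j] _ jsz; rewrite /= nth_rcons.
    have jts : j < size ts by move: jsz; rewrite sz; lia.
    rewrite jts; move: (mem_nth set0 jts) => /(allP sts).
    by rewrite /singleton /big => /eqP ->.
  + by rewrite nth_uniq //; move: isz; rewrite sz; lia.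
  + by rewrite !D -?nbhd_ts //; move: isz; rewrite sz; lia.
Qed.

Lemma cable_path_ends_heads tx ts ty : cable_path T tx ts ty -> ts != [::] ->
  big tx -> big ty -> all (@singleton V) ts ->
  [/\ T tx (head tx ts), T ty (last tx ts), head tx ts \in heads & last tx ts \in heads].
Proof.
move=> cp tsN btx bty sts; have ch := cable_path_cable cp tsN btx bty sts.
have [_ pts _] := cp; split.
- by case: ts tsN {cp ch sts} pts => //= t ts _ /andP[].
- by move: pts; rewrite rcons_path contr_adj_sym => /andP[].
- rewrite inE; apply/asboolP; exists (tx :: rcons ts ty); split => //.
    exact: cable_sub_parts.
  by case: ts tsN {cp ch sts pts}.
- rewrite inE; apply/asboolP; exists (rev (tx :: rcons ts ty)).
  have chr := cable_rev contr_adj_sym ch; split => //; first exact: cable_sub_parts chr.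
  case/lastP: ts tsN {cp ch sts pts chr} => [//|ts t] _.
  by rewrite last_rcons rev_cons !rev_rcons.
Qed.

Lemma compatible_of_proper (col : {set V} -> 'I_3) (f : {ffun V -> 'I_3}) :
  proper_on T (parts F) col ->
  (forall x, x \in big_vertices :|: cable_vertices -> f x = col (W F x)) ->
  compatible e F f.
Proof.
move=> pcol fX.
have fB x : big (W F x) -> f x = col (W F x) by move=> bx; apply: fX; rewrite !inE bx.
have fC x : W F x \in heads -> f x = col (W F x).
  by move=> hx; apply: fX; rewrite in_setU [x \in cable_vertices]inE hx orbT.
have differ A B x y : T A B -> big A -> (big B \/ B \in heads) -> x \in A -> y \in B ->
    f x != f y.
  move=> AB bA bB xA yB; case/andP: (contr_adj_parts AB) => AP BP.
  have -> : f y = col B.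
    by rewrite -(parts_W BP yB); case: bB => [bB|hB]; [apply: fB | apply: fC];
       rewrite (parts_W BP yB).
  by rewrite fB (parts_W AP xA) // pcol.
split.
- move=> x y yW; have [bx|] := boolP (big (W F x)); first by rewrite fB // fB (W_eq yW).
  by rewrite /big -leqNgt => /card_le1_eqP /(_ _ _ (W_refl x) yW) ->.
- by move=> A B AB bA bB x y xA yB; apply: differ AB bA (or_introl bB) xA yB.
- move=> tx ts ty cp tsN btx bty sts.
  have [txh tyl hh lh] := cable_path_ends_heads cp tsN btx bty sts.
  by split=> x y xt yt; apply: differ xt yt; rewrite ?hh ?lh; auto.
Qed.

Lemma card_fixed_vertices : cactus T (parts F) ->
  #|big_vertices :|: cable_vertices| <= 6 * #|F|.
Proof.
move=> cac.
have := card_cable_heads contr_adj_sym cac.2 (@big V) set0 (cactus_connected_in cac).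
have := card_cable_vertices; have := card_big_vertices; have := nbig_parts.
have : #|big_vertices :|: cable_vertices| <= #|big_vertices| + #|cable_vertices|.
  exact: leq_card_setU.
lia.
Qed.

End WitnessStructure.

Theorem lemma3p3 (V : finType) (e : rel V) (k : nat) (F : {set {set V}}) :
  simple_graph e -> two_connected e -> edge_subset e F -> #|F| <= k ->
  cactus (contr_adj e F) (parts F) ->
  exists S : {set {ffun V -> 'I_3}},
    (forall f, f \in S -> compatible e F f) /\ 3 ^ #|V| <= 3 ^ (6 * k) * #|S|.
Proof.
move=> [e_sym _] _ F_edges Fk cac.
have [col pcol] := connected_in_proper_colouring (contr_adj_sym F e_sym)
  (@contr_adj_irr _ e F) cac.2 (cactus_connected_in cac).
pose X := big_vertices F :|: cable_vertices e F.
exists [set f : {ffun V -> 'I_3} | [forall x in X, f x == col (W F x)]]; split.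
  move=> f; rewrite inE => /forall_inP agree.
  by apply: (compatible_of_proper e_sym pcol) => x /agree/eqP.
apply: leq_trans (card_ffun_agree X (fun x => col (W F x))) _.
rewrite leq_mul2r leq_exp2l //; apply/orP; right.
by apply: leq_trans (card_fixed_vertices e_sym F_edges cac) _; rewrite leq_mul2l Fk orbT.
Qed.
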